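(* A group $H$ is generically embeddable if and only if $H$ is countable and every finitely generated subgroup of $H$ is generically embeddable.
   Context: Let $\mathbb N=\{1,2,3,\dots\}$. Equip $\mathbb N^{\mathbb N\times\mathbb N}$ with the product topology of the discrete topology on $\mathbb N$. Let $\mathcal G$ be the subspace consisting of those $A\in\mathbb N^{\mathbb N\times\mathbb N}$ that are the multiplication table of a group on the underlying set $\mathbb N$ whose identity element is $1$. For $G\in\mathcal G$, $\overline G$ denotes the group on $\mathbb N$ with multiplication table $G$. For a group $H$, $\mathcal E_H=\{G\in\mathcal G:\ H\text{ is embeddable into }\overline G\}$; $H$ is generically embeddable if $\mathcal E_H$ is comeager in $\mathcal G$. *)

From Stdlib Require Import List ProofIrrelevance.
Import ListNotations.
Set Implicit Arguments.

Record Group := {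
  carrier :> Type;
  gmul : carrier -> carrier -> carrier;
  gone : carrier;
  ginv : carrier -> carrier;
  gassoc : forall x y z, gmul (gmul x y) z = gmul x (gmul y z);
  gmul1l : forall x, gmul gone x = x;
  gmul1r : forall x, gmul x gone = x;
  gmulVl : forall x, gmul (ginv x) x = gone;
  gmulVr : forall x, gmul x (ginv x) = gone
}.

Definition countable_group (H : Group) : Prop :=
  exists f : H -> nat, forall x y, f x = f y -> x = y.

Inductive gen (H : Group) (s : list H) : H -> Prop :=
| gen_in : forall x, In x s -> gen H s x
| gen_one : gen H s (gone H)
| gen_mul : forall x y, gen H s x -> gen H s y -> gen H s (gmul H x y)
| gen_inv : forall x, gen H s x -> gen H s (ginv H x).
Arguments gen {H} s _.
Arguments gen_one {H} s.

Section FG.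
Variables (H : Group) (s : list H).
Definition fg_carrier := {x : H | gen s x}.
Definition fg_mul (a b : fg_carrier) : fg_carrier :=
  exist _ (gmul H (proj1_sig a) (proj1_sig b))
    (gen_mul (proj2_sig a) (proj2_sig b)).
Definition fg_one : fg_carrier := exist _ (gone H) (gen_one s).
Definition fg_inv (a : fg_carrier) : fg_carrier :=
  exist _ (ginv H (proj1_sig a)) (gen_inv (proj2_sig a)).
Lemma fg_eq (a b : fg_carrier) : proj1_sig a = proj1_sig b -> a = b.
Proof. destruct a, b; simpl; intros ->. f_equal. apply proof_irrelevance. Qed.
Lemma fg_assoc a b c : fg_mul (fg_mul a b) c = fg_mul a (fg_mul b c).
Proof. apply fg_eq; simpl; apply gassoc. Qed.
Lemma fg_1l a : fg_mul fg_one a = a. Proof. apply fg_eq; simpl; apply gmul1l. Qed.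
Lemma fg_1r a : fg_mul a fg_one = a. Proof. apply fg_eq; simpl; apply gmul1r. Qed.
Lemma fg_Vl a : fg_mul (fg_inv a) a = fg_one. Proof. apply fg_eq; simpl; apply gmulVl. Qed.
Lemma fg_Vr a : fg_mul a (fg_inv a) = fg_one. Proof. apply fg_eq; simpl; apply gmulVr. Qed.
End FG.

Definition fg_subgroup (H : Group) (s : list H) : Group :=
  {| carrier := @fg_carrier H s; gmul := @fg_mul H s; gone := @fg_one H s;
     ginv := @fg_inv H s; gassoc := @fg_assoc H s; gmul1l := @fg_1l H s;
     gmul1r := @fg_1r H s; gmulVl := @fg_Vl H s; gmulVr := @fg_Vr H s |}.

(** * The space of group multiplication tables on N.
    The paper's N = {1,2,3,...} with identity 1 is relabelled as Stdlib
    [nat] = {0,1,2,...} via n |-> n-1, so the identity element is 0. *)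
Definition table := nat -> nat -> nat.

Definition is_group_table (A : table) : Prop :=
  (forall x y z, A (A x y) z = A x (A y z)) /\
  (forall x, A 0 x = x /\ A x 0 = x) /\
  (forall x, exists y, A x y = 0 /\ A y x = 0).

(** Product topology of discrete nat on nat^(nat x nat): basic neighbourhoods
    of A are the sets of B agreeing with A on a finite list of positions. *)
Definition agree_on (l : list (nat * nat)) (A B : table) : Prop :=
  forall p, In p l -> A (fst p) (snd p) = B (fst p) (snd p).

(** Open subsets of the subspace G (sets D contained in G that are open in
    the subspace topology). *)
Definition G_open (D : table -> Prop) : Prop :=
  (forall A, D A -> is_group_table A) /\
  (forall A, D A -> exists l, forall B, is_group_table B -> agree_on l A B -> D B).

Definition G_dense (D : table -> Prop) : Prop :=
  forall A l, is_group_table A ->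
    exists B, is_group_table B /\ agree_on l A B /\ D B.

Definition G_comeager (E : table -> Prop) : Prop :=
  exists D : nat -> (table -> Prop),
    (forall n, G_open (D n) /\ G_dense (D n)) /\
    (forall A, is_group_table A -> (forall n, D n A) -> E A).

Definition embeds (H : Group) (A : table) : Prop :=
  exists f : H -> nat,
    (forall x y, f x = f y -> x = y) /\
    (forall x y, f (gmul H x y) = A (f x) (f y)).

Definition E_ (H : Group) (A : table) : Prop :=
  is_group_table A /\ embeds H A.

Definition generically_embeddable (H : Group) : Prop := G_comeager (E_ H).

(* A comeager set of group tables is nonempty (Baire), so a generically embeddable group embeds
   into a group on nat and is countable; its finitely generated subgroups embed wherever it does.

   Conversely, in a generic group any two tuples satisfying the same relations are conjugate: the
   condition is open, and it is dense because the HNN extension conjugating one tuple to the other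
   is countable and can be relabelled on nat to agree with any finite part of the table. Enumerate
   H as e_0, e_1, ...; generically every <e_0, ..., e_(k-1)> embeds, and conjugating these
   embeddings makes the images of e_0, ..., e_(k-1) extend one another. The limit tuple satisfies
   exactly the relations of (e_i), hence defines an embedding of H. *)

From Stdlib Require Import List Arith Lia Classical ClassicalEpsilon FunctionalExtensionality
  PropExtensionality ProofIrrelevance Cantor FinFun Wf_nat.
Import ListNotations.

Section GroupFacts.
Context {G : Group}.

Lemma gmul_cancel_l (a x y : G) : gmul G a x = gmul G a y -> x = y.
Proof.
  intros h. rewrite <- (gmul1l G x), <- (gmul1l G y), <- (gmulVl G a), !gassoc, h.
  reflexivity.
Qed.

Lemma gmul_cancel_r (a x y : G) : gmul G x a = gmul G y a -> x = y.
Proof.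
  intros h. rewrite <- (gmul1r G x), <- (gmul1r G y), <- (gmulVr G a), <- !gassoc, h.
  reflexivity.
Qed.

Lemma ginv_unique (x y : G) : gmul G x y = gone G -> y = ginv G x.
Proof. intros h. apply (gmul_cancel_l x). rewrite h, gmulVr. reflexivity. Qed.

Lemma eq_of_gmul_ginv (x y : G) : gmul G x (ginv G y) = gone G -> x = y.
Proof. intros h. rewrite <- (gmul1r G x), <- (gmulVl G y), <- gassoc, h, gmul1l. reflexivity. Qed.

Lemma ginv_one : ginv G (gone G) = gone G.
Proof. symmetry. apply ginv_unique, gmul1l. Qed.

Lemma eq_conj_of_commute (t x y : G) :
  gmul G t x = gmul G y t -> y = gmul G (gmul G t x) (ginv G t).
Proof. intros h. rewrite h, gassoc, gmulVr, gmul1r. reflexivity. Qed.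

Lemma ginv_gmul (x y : G) : ginv G (gmul G x y) = gmul G (ginv G y) (ginv G x).
Proof.
  symmetry. apply ginv_unique.
  rewrite gassoc, <- (gassoc G y), gmulVr, gmul1l, gmulVr. reflexivity.
Qed.
End GroupFacts.

Definition is_hom (G1 G2 : Group) (f : G1 -> G2) : Prop :=
  forall x y, f (gmul G1 x y) = gmul G2 (f x) (f y).

Section Hom.
Context {G1 G2 : Group} {f : G1 -> G2}.
Hypothesis hf : is_hom G1 G2 f.

Lemma hom_one : f (gone G1) = gone G2.
Proof.
  apply (gmul_cancel_l (f (gone G1))). rewrite <- hf, !gmul1l, gmul1r. reflexivity.
Qed.

Lemma hom_ginv x : f (ginv G1 x) = ginv G2 (f x).
Proof. apply ginv_unique. rewrite <- hf, gmulVr. apply hom_one. Qed.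
End Hom.

Lemma conj_is_hom (G : Group) (t : G) :
  is_hom G G (fun u => gmul G (gmul G t u) (ginv G t)).
Proof.
  intros x y. rewrite !gassoc. do 2 f_equal.
  rewrite <- (gassoc G (ginv G t)), gmulVl, gmul1l. reflexivity.
Qed.

Lemma conj_injective (G : Group) (t : G) :
  Injective (fun u => gmul G (gmul G t u) (ginv G t)).
Proof. intros x y e. apply (gmul_cancel_l t), (gmul_cancel_r (ginv G t)), e. Qed.

(** * Words and relations *)

Inductive word := WVar (i : nat) | WOne | WMul (a b : word) | WInv (a : word).

Fixpoint ev {X : Type} (m : X -> X -> X) (o : X) (iv : X -> X) (v : nat -> X) (w : word) : X :=
  match w with
  | WVar i => v i
  | WOne => o
  | WMul a b => m (ev m o iv v a) (ev m o iv v b)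
  | WInv a => iv (ev m o iv v a)
  end.

Definition evG (G : Group) (v : nat -> G) : word -> G := ev (gmul G) (gone G) (ginv G) v.

Lemma ev_ext {X} m (o : X) iv v v' w : (forall i, v i = v' i) -> ev m o iv v w = ev m o iv v' w.
Proof. intros h; induction w; simpl; congruence. Qed.

Lemma hom_evG (G1 G2 : Group) (f : G1 -> G2) (hf : is_hom G1 G2 f) v w :
  f (evG G1 v w) = evG G2 (fun i => f (v i)) w.
Proof.
  induction w; cbn [evG ev] in *.
  - reflexivity.
  - apply hom_one, hf.
  - rewrite hf, IHw1, IHw2. reflexivity.
  - rewrite hom_ginv, IHw by exact hf. reflexivity.
Qed.

Lemma evG_trivial (G : Group) w : evG G (fun _ => gone G) w = gone G.
Proof.
  induction w; cbn [evG ev] in *; auto.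
  - rewrite IHw1, IHw2. apply gmul1l.
  - rewrite IHw. apply ginv_one.
Qed.

Definition trunc {X : Type} (o : X) (k : nat) (v : nat -> X) (i : nat) : X :=
  if i <? k then v i else o.

Lemma trunc_trunc {X : Type} (o : X) k m v i : k <= m -> trunc o k (trunc o m v) i = trunc o k v i.
Proof.
  intros hkm. unfold trunc. destruct (Nat.ltb_spec i k); [|reflexivity].
  replace (i <? m) with true by (symmetry; apply Nat.ltb_lt; lia). reflexivity.
Qed.

Fixpoint wtrunc (k : nat) (w : word) : word :=
  match w with
  | WVar i => if i <? k then WVar i else WOne
  | WOne => WOne
  | WMul a b => WMul (wtrunc k a) (wtrunc k b)
  | WInv a => WInv (wtrunc k a)
  end.

Lemma ev_wtrunc {X} m (o : X) iv v k w : ev m o iv v (wtrunc k w) = ev m o iv (trunc o k v) w.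
Proof.
  unfold trunc. induction w; simpl; try congruence. destruct (i <? k); reflexivity.
Qed.

Fixpoint word_bound (w : word) : nat :=
  match w with
  | WVar i => S i
  | WOne => 0
  | WMul a b => max (word_bound a) (word_bound b)
  | WInv a => word_bound a
  end.

Lemma ev_trunc_bound {X} m (o : X) iv v k w :
  word_bound w <= k -> ev m o iv (trunc o k v) w = ev m o iv v w.
Proof.
  unfold trunc. induction w; simpl; intros hk; try reflexivity.
  - replace (i <? k) with true by (symmetry; apply Nat.ltb_lt; lia). reflexivity.
  - rewrite IHw1, IHw2 by lia. reflexivity.
  - rewrite IHw by lia. reflexivity.
Qed.

Definition same_relations (G1 : Group) (v1 : nat -> G1) (G2 : Group) (v2 : nat -> G2) : Prop :=
  forall w, evG G1 v1 w = gone G1 <-> evG G2 v2 w = gone G2.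

Section SameRelations.
Context {G1 G2 G3 : Group} {v1 : nat -> G1} {v2 : nat -> G2} {v3 : nat -> G3}.

Lemma same_relations_sym : same_relations G1 v1 G2 v2 -> same_relations G2 v2 G1 v1.
Proof. intros h w. symmetry. apply h. Qed.

Lemma same_relations_trans :
  same_relations G1 v1 G2 v2 -> same_relations G2 v2 G3 v3 -> same_relations G1 v1 G3 v3.
Proof. intros h1 h2 w. rewrite (h1 w). apply h2. Qed.

Lemma same_relations_ext v1' v2' : (forall i, v1 i = v1' i) -> (forall i, v2 i = v2' i) ->
  same_relations G1 v1 G2 v2 -> same_relations G1 v1' G2 v2'.
Proof.
  intros e1 e2 h w. unfold evG. rewrite <- (ev_ext _ _ _ _ _ w e1), <- (ev_ext _ _ _ _ _ w e2).
  apply h.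
Qed.

Lemma same_relations_eq : same_relations G1 v1 G2 v2 ->
  forall w w', evG G1 v1 w = evG G1 v1 w' <-> evG G2 v2 w = evG G2 v2 w'.
Proof.
  intros h w w'. specialize (h (WMul w (WInv w'))). cbn [evG ev] in h.
  split; intros e.
  - apply eq_of_gmul_ginv, h. fold (evG G1 v1 w) (evG G1 v1 w'). rewrite e. apply gmulVr.
  - apply eq_of_gmul_ginv, h. fold (evG G2 v2 w) (evG G2 v2 w'). rewrite e. apply gmulVr.
Qed.

Lemma same_relations_trunc k :
  same_relations G1 v1 G2 v2 ->
  same_relations G1 (trunc (gone G1) k v1) G2 (trunc (gone G2) k v2).
Proof. intros h w. unfold evG. rewrite <- !ev_wtrunc. apply h. Qed.

Lemma same_relations_of_trunc :
  (forall k, same_relations G1 (trunc (gone G1) k v1) G2 (trunc (gone G2) k v2)) ->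
  same_relations G1 v1 G2 v2.
Proof.
  intros h w. specialize (h (word_bound w) w). unfold evG in *.
  rewrite !ev_trunc_bound in h by reflexivity. exact h.
Qed.
End SameRelations.

Lemma same_relations_trivial (G1 G2 : Group) :
  same_relations G1 (fun _ => gone G1) G2 (fun _ => gone G2).
Proof. intros w. rewrite !evG_trivial. tauto. Qed.

Lemma same_relations_hom (G1 G2 : Group) (c : G1 -> G2) (v : nat -> G1) :
  is_hom G1 G2 c -> Injective c -> same_relations G1 v G2 (fun i => c (v i)).
Proof.
  intros hc hinj w. rewrite <- hom_evG by exact hc.
  split; intros e.
  - rewrite e. apply (hom_one hc).
  - apply hinj. rewrite e. symmetry. apply (hom_one hc).
Qed.

Lemma embedding_of_same_relations (G1 G2 : Group) (e : nat -> G1) (f : G1 -> nat) (z : nat -> G2) :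
  (forall x, e (f x) = x) -> same_relations G1 e G2 z ->
  Injective (fun x => z (f x)) /\ is_hom G1 G2 (fun x => z (f x)).
Proof.
  intros hef hrel. split.
  - intros x y hxy. rewrite <- (hef x), <- (hef y).
    exact (proj2 (same_relations_eq hrel (WVar (f x)) (WVar (f y))) hxy).
  - intros x y.
    apply (same_relations_eq hrel (WVar (f (gmul G1 x y))) (WMul (WVar (f x)) (WVar (f y)))).
    cbn [evG ev]. rewrite !hef. reflexivity.
Qed.

Definition in_span (G : Group) (v : nat -> G) (x : G) : Prop := exists w, evG G v w = x.

Section Span.
Context {G : Group} (v : nat -> G).

Lemma in_span_var i : in_span G v (v i).
Proof. exists (WVar i). reflexivity. Qed.
Lemma in_span_one : in_span G v (gone G).
Proof. exists WOne. reflexivity. Qed.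
Lemma in_span_mul {x y} : in_span G v x -> in_span G v y -> in_span G v (gmul G x y).
Proof. intros [a <-] [b <-]. exists (WMul a b). reflexivity. Qed.
Lemma in_span_inv {x} : in_span G v x -> in_span G v (ginv G x).
Proof. intros [a <-]. exists (WInv a). reflexivity. Qed.

Definition span_carrier := {x : G | in_span G v x}.
Definition span_mul (a b : span_carrier) : span_carrier :=
  exist _ (gmul G (proj1_sig a) (proj1_sig b)) (in_span_mul (proj2_sig a) (proj2_sig b)).
Definition span_one : span_carrier := exist _ (gone G) in_span_one.
Definition span_inv (a : span_carrier) : span_carrier :=
  exist _ (ginv G (proj1_sig a)) (in_span_inv (proj2_sig a)).

Lemma span_val_inj (a b : span_carrier) : proj1_sig a = proj1_sig b -> a = b.
Proof. destruct a, b; simpl. apply subset_eq_compat. Qed.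

Lemma span_assoc a b c : span_mul (span_mul a b) c = span_mul a (span_mul b c).
Proof. apply span_val_inj, gassoc. Qed.
Lemma span_1l a : span_mul span_one a = a. Proof. apply span_val_inj, gmul1l. Qed.
Lemma span_1r a : span_mul a span_one = a. Proof. apply span_val_inj, gmul1r. Qed.
Lemma span_Vl a : span_mul (span_inv a) a = span_one. Proof. apply span_val_inj, gmulVl. Qed.
Lemma span_Vr a : span_mul a (span_inv a) = span_one. Proof. apply span_val_inj, gmulVr. Qed.

Definition span : Group :=
  {| carrier := span_carrier; gmul := span_mul; gone := span_one; ginv := span_inv;
     gassoc := span_assoc; gmul1l := span_1l; gmul1r := span_1r;
     gmulVl := span_Vl; gmulVr := span_Vr |}.
End Span.

(** * Countable sets *)

Lemma to_nat_inj : Injective to_nat.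
Proof. intros p q h. rewrite <- (cancel_of_to p), <- (cancel_of_to q), h. reflexivity. Qed.

Fixpoint word_code (w : word) : nat :=
  match w with
  | WVar i => to_nat (0, i)
  | WOne => to_nat (1, 0)
  | WMul a b => to_nat (2, to_nat (word_code a, word_code b))
  | WInv a => to_nat (3, word_code a)
  end.

Lemma word_code_inj : Injective word_code.
Proof.
  intros w; induction w; intros [] h; cbn [word_code] in h; apply to_nat_inj in h;
    try discriminate.
  all: apply (f_equal snd) in h; cbn [snd] in h.
  - f_equal; exact h.
  - reflexivity.
  - apply to_nat_inj in h. injection h as h1 h2. f_equal; auto.
  - f_equal; auto.
Qed.

Lemma span_countable (G : Group) (v : nat -> G) : countable_group (span v).
Proof.
  set (word_of (x : span v) := epsilon (inhabits WOne) (fun w => evG G v w = proj1_sig x)).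
  assert (hword : forall x, evG G v (word_of x) = proj1_sig x).
  { intros x. apply (epsilon_spec (inhabits WOne) (fun w => evG G v w = proj1_sig x)), proj2_sig. }
  exists (fun x => word_code (word_of x)). intros x y h.
  apply span_val_inj. rewrite <- hword, <- (hword y). f_equal. apply word_code_inj, h.
Qed.

Definition equinumerous (X Y : Type) : Prop :=
  exists (f : X -> Y) (g : Y -> X), (forall x, g (f x) = x) /\ (forall y, f (g y) = y).

Lemma equinumerous_sym {X Y : Type} : equinumerous X Y -> equinumerous Y X.
Proof. intros [f [g [h1 h2]]]. exists g, f. auto. Qed.

Lemma equinumerous_trans {X Y Z : Type} : equinumerous X Y -> equinumerous Y Z -> equinumerous X Z.
Proof.
  intros [f [g [h1 h2]]] [f' [g' [h1' h2']]].
  exists (fun x => f' (f x)), (fun z => g (g' z)). split; intros.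
  - rewrite h1'. apply h1.
  - rewrite h2. apply h2'.
Qed.

Lemma least_element (P : nat -> Prop) : (exists n, P n) -> exists n, P n /\ forall m, P m -> n <= m.
Proof.
  intros h.
  destruct (dec_inh_nat_subset_has_unique_least_element P (fun n => classic (P n)) h)
    as [n [[hn hmin] _]].
  eauto.
Qed.

Lemma injective_unbounded (u : nat -> nat) : Injective u -> forall m, exists n, m <= u n.
Proof.
  intros hu m. apply NNPP. intros hno.
  assert (hlt : forall n, u n < m) by (intros n; apply Nat.nle_gt; eauto).
  assert (hnd : NoDup (map u (seq 0 (S m)))) by (apply Injective_map_NoDup, seq_NoDup; exact hu).
  assert (hincl : incl (map u (seq 0 (S m))) (seq 0 m)).
  { intros y hy. apply in_map_iff in hy as [x [<- _]]. apply in_seq. specialize (hlt x). lia. }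
  pose proof (NoDup_incl_length hnd hincl). rewrite length_map, !length_seq in *. lia.
Qed.

Section Enumeration.
Variable P : nat -> Prop.
Hypothesis P_unbounded : forall m, exists n, m <= n /\ P n.

Definition least_from (m : nat) : nat :=
  epsilon (inhabits 0) (fun n => (m <= n /\ P n) /\ forall k, m <= k /\ P k -> n <= k).

Lemma least_from_spec m :
  (m <= least_from m /\ P (least_from m)) /\ forall k, m <= k -> P k -> least_from m <= k.
Proof.
  unfold least_from.
  edestruct (epsilon_spec (inhabits 0)
    (fun n => (m <= n /\ P n) /\ forall k, m <= k /\ P k -> n <= k)) as [h1 h2].
  - apply least_element. destruct (P_unbounded m) as [n hn]. eauto.
  - split; auto.
Qed.

Fixpoint enum (k : nat) : nat :=
  match k with 0 => least_from 0 | S k => least_from (S (enum k)) end.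

Lemma enum_in k : P (enum k).
Proof. destruct k; apply least_from_spec. Qed.

Lemma enum_lt_succ k : enum k < enum (S k).
Proof. apply least_from_spec. Qed.

Lemma enum_strict a b : a < b -> enum a < enum b.
Proof. induction 1; [|pose proof (enum_lt_succ m)]; pose proof (enum_lt_succ a); lia. Qed.

Lemma enum_inj : Injective enum.
Proof.
  intros a b h. destruct (lt_eq_lt_dec a b) as [[l|l]|l]; auto;
    apply enum_strict in l; lia.
Qed.

Lemma enum_ge k : k <= enum k.
Proof. induction k; [lia|]. pose proof (enum_lt_succ k). lia. Qed.

Lemma enum_surj n : P n -> exists k, enum k = n.
Proof.
  intros hn.
  destruct (least_element (fun k => n <= enum k)) as [k [hk hmin]]; [exists n; apply enum_ge|].
  exists k. apply Nat.le_antisymm; auto. destruct k as [|j].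
  - apply least_from_spec; auto; lia.
  - assert (enum j < n) by (apply Nat.nle_gt; intros hj; specialize (hmin j hj); lia).
    apply least_from_spec; auto.
Qed.
End Enumeration.

(* Enumerate the image of [e], which is unbounded, in increasing order. *)
Lemma equinumerous_nat {X : Type} (e : X -> nat) (i : nat -> X) :
  Injective e -> Injective i -> equinumerous X nat.
Proof.
  intros he hi.
  set (P n := exists x, e x = n).
  assert (hP : forall m, exists n, m <= n /\ P n).
  { intros m. destruct (injective_unbounded (fun n => e (i n)) (fun a b h => hi _ _ (he _ _ h)) m)
      as [n hn].
    exists (e (i n)). split; [exact hn | exists (i n); reflexivity]. }
  set (g := enum P).
  set (to_index x := epsilon (inhabits 0) (fun k => g k = e x)).
  set (of_index k := epsilon (inhabits (i 0)) (fun x => e x = g k)).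
  assert (hto : forall x, g (to_index x) = e x).
  { intros x. apply (epsilon_spec (inhabits 0) (fun k => g k = e x)).
    apply (enum_surj P hP). exists x; reflexivity. }
  assert (hof : forall k, e (of_index k) = g k).
  { intros k. apply (epsilon_spec (inhabits (i 0)) (fun x => e x = g k)), (enum_in P hP). }
  exists to_index, of_index. split.
  - intros x. apply he. rewrite hof, hto. reflexivity.
  - intros k. apply (enum_inj P hP). fold g. rewrite hto, hof. reflexivity.
Qed.

Lemma countable_enumeration {H : Group} :
  countable_group H -> exists (f : H -> nat) (e : nat -> H), forall x, e (f x) = x.
Proof.
  intros [f hf]. exists f, (fun n => epsilon (inhabits (gone H)) (fun x => f x = n)).
  intros x. apply hf, (epsilon_spec (inhabits (gone H)) (fun y => f y = f x)).
  exists x. reflexivity.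
Qed.

(** * Group tables and comeager sets *)

Definition tinv (A : table) (x : nat) : nat :=
  epsilon (inhabits 0) (fun y => A x y = 0 /\ A y x = 0).

Section TableGroup.
Variables (A : table) (HA : is_group_table A).

Lemma tinv_spec x : A x (tinv A x) = 0 /\ A (tinv A x) x = 0.
Proof.
  apply (epsilon_spec (inhabits 0) (fun y => A x y = 0 /\ A y x = 0)). apply HA.
Qed.

Lemma table_assoc x y z : A (A x y) z = A x (A y z). Proof. apply HA. Qed.
Lemma table_mul0l x : A 0 x = x. Proof. apply HA. Qed.
Lemma table_mul0r x : A x 0 = x. Proof. apply HA. Qed.
Lemma table_mulVl x : A (tinv A x) x = 0. Proof. apply tinv_spec. Qed.
Lemma table_mulVr x : A x (tinv A x) = 0. Proof. apply tinv_spec. Qed.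

Definition tgroup : Group :=
  {| carrier := nat; gmul := A; gone := 0; ginv := tinv A;
     gassoc := table_assoc; gmul1l := table_mul0l; gmul1r := table_mul0r;
     gmulVl := table_mulVl; gmulVr := table_mulVr |}.

Lemma tinv_unique x y : A x y = 0 -> y = tinv A x.
Proof. exact (@ginv_unique tgroup x y). Qed.

Lemma tgroup_countable : countable_group tgroup.
Proof. exists (fun x => x). intros x y h. exact h. Qed.
End TableGroup.

Definition evT (A : table) (v : nat -> nat) : word -> nat := ev A 0 (tinv A) v.

Lemma xor_group_table : is_group_table Nat.lxor.
Proof.
  split; [|split].
  - intros; apply Nat.lxor_assoc.
  - intros; split; [apply Nat.lxor_0_l | apply Nat.lxor_0_r].
  - intros x; exists x; rewrite Nat.lxor_nilpotent; auto.
Qed.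

Lemma agree_on_app l1 l2 A B : agree_on (l1 ++ l2) A B <-> agree_on l1 A B /\ agree_on l2 A B.
Proof.
  unfold agree_on; split.
  - intros h; split; intros p hp; apply h; apply in_or_app; auto.
  - intros [h1 h2] p hp; apply in_app_or in hp as [hp|hp]; auto.
Qed.

Fixpoint word_support (A : table) (v : nat -> nat) (w : word) : list (nat * nat) :=
  match w with
  | WVar _ | WOne => []
  | WMul a b => word_support A v a ++ word_support A v b ++ [(evT A v a, evT A v b)]
  | WInv a => word_support A v a ++ [(evT A v a, tinv A (evT A v a))]
  end.

Lemma evT_local A B v w : is_group_table A -> is_group_table B ->
  agree_on (word_support A v w) A B -> evT B v w = evT A v w.
Proof.
  intros HA HB. induction w; cbn [word_support]; intros h; try reflexivity.
  - apply agree_on_app in h as [h1 h]. apply agree_on_app in h as [h2 h3].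
    unfold evT in *; cbn [ev]. rewrite IHw1, IHw2 by auto.
    symmetry. apply (h3 (_, _)). left; reflexivity.
  - apply agree_on_app in h as [h1 h2].
    unfold evT in *; cbn [ev]. rewrite IHw by auto.
    symmetry. apply tinv_unique; auto.
    specialize (h2 (_, _) (or_introl eq_refl)). cbn [fst snd] in h2.
    rewrite <- h2. apply tinv_spec, HA.
Qed.

Lemma comeager_mono (E1 E2 : table -> Prop) :
  (forall A, is_group_table A -> E1 A -> E2 A) -> G_comeager E1 -> G_comeager E2.
Proof. intros h [D [h1 h2]]. exists D. split; auto. Qed.

Lemma comeager_of_dense_open D : G_open D -> G_dense D -> G_comeager D.
Proof. intros ho hd. exists (fun _ => D). split; auto. intros A _ h. exact (h 0). Qed.

Lemma comeager_countable (E : nat -> table -> Prop) :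
  (forall k, G_comeager (E k)) -> G_comeager (fun A => forall k, E k A).
Proof.
  intros h. apply choice in h as [F hF].
  exists (fun n => F (fst (of_nat n)) (snd (of_nat n))). split.
  - intros n. apply hF.
  - intros A HA hn k. apply (proj2 (hF k)); auto. intros m.
    specialize (hn (to_nat (k, m))). rewrite cancel_of_to in hn. exact hn.
Qed.

Lemma comeager_and (E1 E2 : table -> Prop) :
  G_comeager E1 -> G_comeager E2 -> G_comeager (fun A => E1 A /\ E2 A).
Proof.
  intros h1 h2.
  apply (comeager_mono (fun A => forall k, match k with 0 => E1 A | _ => E2 A end)).
  - intros A _ h. exact (conj (h 0) (h 1)).
  - apply comeager_countable. intros [|k]; assumption.
Qed.

(** * The Baire category theorem for the space of group tables *)

Definition square (n : nat) : list (nat * nat) := list_prod (seq 0 n) (seq 0 n).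

Definition inverse_positions (B : table) (n : nat) : list (nat * nat) :=
  flat_map (fun x => [(x, tinv B x); (tinv B x, x)]) (seq 0 n).

Section Baire.
Variable D : nat -> table -> Prop.
Hypothesis D_dense_open : forall n, G_open (D n) /\ G_dense (D n).

(* Step [n] enters [D n] and freezes the products and inverses of [0..n]; the limit of these
   approximations is then a group table lying in every [D n]. *)
Definition refines (n : nat) (p q : table * list (nat * nat)) : Prop :=
  is_group_table (fst q) /\ agree_on (snd p) (fst p) (fst q) /\ incl (snd p) (snd q) /\
  (forall C, is_group_table C -> agree_on (snd q) (fst q) C -> D n C) /\
  incl (square (S n)) (snd q) /\ incl (inverse_positions (fst q) (S n)) (snd q).

Lemma refines_exists n p : is_group_table (fst p) -> exists q, refines n p q.
Proof.
  intros hp.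
  destruct (proj2 (D_dense_open n) (fst p) (snd p) hp) as [B [HB [hag hDB]]].
  destruct (proj2 (proj1 (D_dense_open n)) B hDB) as [l hl].
  exists (B, snd p ++ l ++ square (S n) ++ inverse_positions B (S n)).
  cbn [fst snd]. split; [exact HB|]. split; [exact hag|]. split; [|split; [|split]].
  - apply incl_appl, incl_refl.
  - intros C HC h. apply hl; auto.
    apply agree_on_app in h as [_ h]. apply agree_on_app in h as [h _]. exact h.
  - apply incl_appr, incl_appr, incl_appl, incl_refl.
  - apply incl_appr, incl_appr, incl_appr, incl_refl.
Qed.

Fixpoint approx (n : nat) : table * list (nat * nat) :=
  match n with
  | 0 => (Nat.lxor, [])
  | S n => epsilon (inhabits (approx n)) (refines n (approx n))
  end.

Lemma approx_group n : is_group_table (fst (approx n)).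
Proof.
  induction n as [|n IH]; [apply xor_group_table|].
  apply (epsilon_spec (inhabits (approx n)) (refines n (approx n)) (refines_exists n _ IH)).
Qed.

Lemma approx_refines n : refines n (approx n) (approx (S n)).
Proof.
  apply (epsilon_spec (inhabits (approx n)) (refines n (approx n))), refines_exists, approx_group.
Qed.

Lemma approx_stable n m : n <= m ->
  incl (snd (approx n)) (snd (approx m)) /\
  agree_on (snd (approx n)) (fst (approx n)) (fst (approx m)).
Proof.
  induction 1 as [|m _ [hincl hag]].
  - split; [apply incl_refl | intros p _; reflexivity].
  - destruct (approx_refines m) as [_ [hag' [hincl' _]]]. split.
    + eapply incl_tran; eauto.
    + intros p hp. rewrite hag by exact hp. apply hag', hincl, hp.
Qed.

Lemma square_in_approx m x y : x < m -> y < m -> In (x, y) (snd (approx m)).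
Proof.
  intros hx hy. destruct m as [|n]; [lia|].
  destruct (approx_refines n) as [_ [_ [_ [_ [hsquare _]]]]].
  apply hsquare, in_prod; apply in_seq; lia.
Qed.

Definition limit_table (x y : nat) : nat := fst (approx (S (max x y))) x y.

Lemma limit_table_agree m : agree_on (snd (approx m)) (fst (approx m)) limit_table.
Proof.
  intros [x y] hp. cbn [fst snd]. unfold limit_table.
  set (k := S (max x y)). set (N := max m k).
  pose proof (proj2 (approx_stable m N ltac:(lia)) (x, y) hp) as hm.
  pose proof (proj2 (approx_stable k N ltac:(lia)) (x, y) ltac:(apply square_in_approx; lia)) as hk.
  cbn [fst snd] in hm, hk. congruence.
Qed.

Lemma limit_table_eq m x y : x < m -> y < m -> limit_table x y = fst (approx m) x y.
Proof. intros hx hy. symmetry. apply (limit_table_agree m (x, y)), square_in_approx; auto. Qed.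

Lemma limit_table_group : is_group_table limit_table.
Proof.
  split; [|split].
  - intros x y z.
    set (a := limit_table x y). set (b := limit_table y z).
    set (m := S (x + y + z + a + b)).
    assert (hm : x < m /\ y < m /\ z < m /\ a < m /\ b < m) by (unfold m; lia).
    rewrite (limit_table_eq m a z), (limit_table_eq m x b) by lia.
    unfold a, b. rewrite (limit_table_eq m x y), (limit_table_eq m y z) by lia.
    apply approx_group.
  - intros x. rewrite !(limit_table_eq (S x)) by lia. apply approx_group.
  - intros x. set (B := fst (approx (S x))). exists (tinv B x).
    destruct (approx_refines x) as [_ [_ [_ [_ [_ hinv]]]]].
    assert (hpos : forall p, In p [(x, tinv B x); (tinv B x, x)] -> In p (snd (approx (S x)))).
    { intros p hp. apply hinv, in_flat_map. exists x. split; [apply in_seq; lia | exact hp]. }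
    pose proof (limit_table_agree (S x) (x, tinv B x) ltac:(apply hpos; simpl; auto)) as h1.
    pose proof (limit_table_agree (S x) (tinv B x, x) ltac:(apply hpos; simpl; auto)) as h2.
    cbn [fst snd] in h1, h2. rewrite <- h1, <- h2. apply tinv_spec, approx_group.
Qed.

Lemma limit_table_in n : D n limit_table.
Proof.
  destruct (approx_refines n) as [_ [_ [_ [hD _]]]].
  apply hD; [apply limit_table_group | apply limit_table_agree].
Qed.
End Baire.

Lemma comeager_nonempty E : G_comeager E -> exists A, is_group_table A /\ E A.
Proof.
  intros [D [hD hE]]. exists (limit_table D).
  pose proof (limit_table_group D hD) as hgroup.
  split; [exact hgroup | apply hE; [exact hgroup | intros n; exact (limit_table_in D hD n)]].
Qed.

(** * Symmetric groups and relabelling *)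

Record bijection (X : Type) := Bijection {
  fwd : X -> X;
  bwd : X -> X;
  fwd_bwd : forall x, fwd (bwd x) = x;
  bwd_fwd : forall x, bwd (fwd x) = x
}.
Arguments Bijection {X}.
Arguments fwd {X}.
Arguments bwd {X}.
Arguments fwd_bwd {X}.
Arguments bwd_fwd {X}.

Section Sym.
Variable X : Type.

Lemma bijection_eq (p q : bijection X) : (forall x, fwd p x = fwd q x) -> p = q.
Proof.
  destruct p as [f g hfg hgf], q as [f' g' hfg' hgf']; cbn. intros h.
  apply functional_extensionality in h. subst f'.
  assert (g = g').
  { apply functional_extensionality. intros x. rewrite <- (hfg' x) at 1. apply hgf. }
  subst g'. f_equal; apply proof_irrelevance.
Qed.

Definition bij_mul (p q : bijection X) : bijection X.
Proof.
  refine (Bijection (fun x => fwd p (fwd q x)) (fun x => bwd q (bwd p x)) _ _);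
    intros x; rewrite ?fwd_bwd, ?bwd_fwd; reflexivity.
Defined.

Definition bij_one : bijection X :=
  Bijection (fun x => x) (fun x => x) (fun _ => eq_refl) (fun _ => eq_refl).

Definition bij_inv (p : bijection X) : bijection X :=
  Bijection (bwd p) (fwd p) (bwd_fwd p) (fwd_bwd p).

Lemma bij_assoc p q r : bij_mul (bij_mul p q) r = bij_mul p (bij_mul q r).
Proof. apply bijection_eq. reflexivity. Qed.
Lemma bij_mul1l p : bij_mul bij_one p = p. Proof. apply bijection_eq. reflexivity. Qed.
Lemma bij_mul1r p : bij_mul p bij_one = p. Proof. apply bijection_eq. reflexivity. Qed.
Lemma bij_mulVl p : bij_mul (bij_inv p) p = bij_one.
Proof. apply bijection_eq, bwd_fwd. Qed.
Lemma bij_mulVr p : bij_mul p (bij_inv p) = bij_one.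
Proof. apply bijection_eq, fwd_bwd. Qed.

Definition Sym : Group :=
  {| carrier := bijection X; gmul := bij_mul; gone := bij_one; ginv := bij_inv;
     gassoc := bij_assoc; gmul1l := bij_mul1l; gmul1r := bij_mul1r;
     gmulVl := bij_mulVl; gmulVr := bij_mulVr |}.
End Sym.

Definition swap (a b n : nat) : nat := if n =? a then b else if n =? b then a else n.

Lemma swap_involutive a b n : swap a b (swap a b n) = n.
Proof.
  unfold swap.
  destruct (Nat.eqb_spec n a); destruct (Nat.eqb_spec n b); subst; rewrite ?Nat.eqb_refl;
    repeat match goal with |- context [?x =? ?y] => destruct (Nat.eqb_spec x y) end; lia.
Qed.

(* Composing with transpositions, one point at a time. *)
Lemma bijection_fixing {Y : Type} (iota : nat -> Y) :
  equinumerous Y nat -> Injective iota -> forall F : list nat,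
  exists (psi : Y -> nat) (chi : nat -> Y),
    (forall y, chi (psi y) = y) /\ (forall n, psi (chi n) = n) /\
    (forall a, In a F -> psi (iota a) = a).
Proof.
  intros [f [g [hgf hfg]]] hiota F. induction F as [|a F [psi [chi [h1 [h2 h3]]]]].
  - exists f, g. repeat split; auto. intros a [].
  - set (c := psi (iota a)).
    exists (fun y => swap c a (psi y)), (fun n => chi (swap c a n)). repeat split.
    + intros y. rewrite swap_involutive. auto.
    + intros n. rewrite h2. apply swap_involutive.
    + intros b [<-|hb]; unfold swap; fold c; [rewrite Nat.eqb_refl; reflexivity|].
      rewrite h3 by exact hb.
      assert (hc : b = c -> b = a).
      { unfold c. intros e. apply hiota. rewrite <- (h1 (iota b)), (h3 b hb), e, h1. reflexivity. }
      assert (ha : b = a -> c = a) by (intros <-; apply h3, hb).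
      destruct (Nat.eqb_spec b c); destruct (Nat.eqb_spec b a); intuition congruence.
Qed.

Section Transport.
Variables (Y : Group) (psi : Y -> nat) (chi : nat -> Y).
Hypotheses (chi_psi : forall y, chi (psi y) = y) (psi_chi : forall n, psi (chi n) = n).
Hypothesis psi_one : psi (gone Y) = 0.

Definition transport_table : table := fun u v => psi (gmul Y (chi u) (chi v)).

Lemma transport_table_group : is_group_table transport_table.
Proof.
  assert (chi_zero : chi 0 = gone Y) by (rewrite <- psi_one; apply chi_psi).
  unfold transport_table. split; [|split].
  - intros. rewrite !chi_psi, gassoc. reflexivity.
  - intros x. rewrite chi_zero, gmul1l, gmul1r, psi_chi. auto.
  - intros x. exists (psi (ginv Y (chi x))). rewrite chi_psi, gmulVl, gmulVr, psi_one. auto.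
Qed.

Lemma transport_table_mul x y : transport_table (psi x) (psi y) = psi (gmul Y x y).
Proof. unfold transport_table. rewrite !chi_psi. reflexivity. Qed.
End Transport.

Definition entries (A : table) (l : list (nat * nat)) : list nat :=
  flat_map (fun p => [fst p; snd p; A (fst p) (snd p)]) l.

(* Transport the group law along a bijection [Y ~ nat] that fixes the copies of all elements
   occurring in [l] or [F]. *)
Lemma relabel (A : table) (HA : is_group_table A) {Y : Group} (iota : nat -> Y) :
  countable_group Y -> Injective iota -> is_hom (tgroup A HA) Y iota ->
  forall (l : list (nat * nat)) (F : list nat),
  exists B : table, is_group_table B /\ agree_on l A B /\
    exists psi : Y -> nat, (forall a, In a F -> psi (iota a) = a) /\
      (forall x y, B (psi x) (psi y) = psi (gmul Y x y)).
Proof.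
  intros [code hcode] hiota hhom l F.
  destruct (bijection_fixing iota (equinumerous_nat code iota hcode hiota) hiota
    (0 :: F ++ entries A l)) as [psi [chi [h1 [h2 hfix]]]].
  assert (hfixF : forall a, In a F -> psi (iota a) = a)
    by (intros a ha; apply hfix; right; apply in_or_app; auto).
  assert (hfixl : forall a, In a (entries A l) -> psi (iota a) = a)
    by (intros a ha; apply hfix; right; apply in_or_app; auto).
  assert (h0 : psi (gone Y) = 0)
    by (rewrite <- (hom_one hhom); apply hfix; left; reflexivity).
  exists (transport_table Y psi chi). split; [apply transport_table_group; auto|split].
  - intros [a b] hp. cbn [fst snd].
    assert (hin : forall c, c = a \/ c = b \/ c = A a b -> In c (entries A l)).
    { intros c hc. apply in_flat_map. exists (a, b). split; [exact hp|].
      destruct hc as [-> | [-> | ->]]; simpl; auto. }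
    rewrite <- (hfixl (A a b)) at 1 by auto.
    change (A a b) with (gmul (tgroup A HA) a b).
    rewrite hhom, <- (transport_table_mul Y psi chi h1), !hfixl by auto. reflexivity.
  - exists psi. split; [exact hfixF | apply transport_table_mul; exact h1].
Qed.

(** * HNN extensions *)

Section Transversal.
Context {G : Group} (v : nat -> G).

Definition same_coset (x y : G) : Prop := exists k, in_span G v k /\ y = gmul G k x.

Lemma same_coset_mul k x : in_span G v k -> same_coset (gmul G k x) = same_coset x.
Proof.
  intros hk. apply functional_extensionality. intros y. apply propositional_extensionality.
  split; intros [k' [hk' ->]].
  - exists (gmul G k' k). split; [apply in_span_mul; auto | symmetry; apply gassoc].
  - exists (gmul G k' (ginv G k)). split; [apply in_span_mul, in_span_inv; auto|].
    rewrite gassoc, <- (gassoc G (ginv G k)), gmulVl, gmul1l. reflexivity.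
Qed.

Definition coset_rep (x : G) : G := epsilon (inhabits (gone G)) (same_coset x).

Lemma coset_rep_spec x : same_coset x (coset_rep x).
Proof.
  apply (epsilon_spec (inhabits (gone G)) (same_coset x)).
  exists x, (gone G). split; [apply in_span_one | symmetry; apply gmul1l].
Qed.

Lemma coset_rep_mul k x : in_span G v k -> coset_rep (gmul G k x) = coset_rep x.
Proof. intros hk. unfold coset_rep. rewrite same_coset_mul by exact hk. reflexivity. Qed.

Lemma coset_rep_idem x : coset_rep (coset_rep x) = coset_rep x.
Proof. destruct (coset_rep_spec x) as [k [hk e]]. rewrite e at 1. apply coset_rep_mul, hk. Qed.

Definition coset_part (x : G) : G := gmul G x (ginv G (coset_rep x)).

Lemma coset_part_in_span x : in_span G v (coset_part x).
Proof.
  destruct (coset_rep_spec x) as [k [hk e]]. unfold coset_part.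
  rewrite e, ginv_gmul, <- gassoc, gmulVr, gmul1l. apply in_span_inv, hk.
Qed.

Lemma coset_part_rep x : gmul G (coset_part x) (coset_rep x) = x.
Proof. unfold coset_part. rewrite gassoc, gmulVl, gmul1r. reflexivity. Qed.

Lemma coset_part_mul k x : in_span G v k -> coset_part (gmul G k x) = gmul G k (coset_part x).
Proof. intros hk. unfold coset_part. rewrite coset_rep_mul, gassoc by exact hk. reflexivity. Qed.

Lemma coset_part_of_rep k r : in_span G v k -> coset_rep r = r -> coset_part (gmul G k r) = k.
Proof.
  intros hk hr. rewrite coset_part_mul by exact hk. unfold coset_part.
  rewrite hr, gmulVr, gmul1r. reflexivity.
Qed.

(* A right coset of the span of [v], given by its representative, and a copy number. *)
Definition coset_index : Type := ({r : G | coset_rep r = r} * nat)%type.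

Definition coset_of (x : G) (n : nat) : coset_index :=
  (exist _ (coset_rep x) (coset_rep_idem x), n).

Lemma coset_of_mul k x n : in_span G v k -> coset_of (gmul G k x) n = coset_of x n.
Proof. intros hk. unfold coset_of. f_equal. apply subset_eq_compat, coset_rep_mul, hk. Qed.

Lemma coset_of_index (q : coset_index) : coset_of (proj1_sig (fst q)) (snd q) = q.
Proof. destruct q as [[r hr] n]. unfold coset_of. f_equal. apply subset_eq_compat, hr. Qed.

Lemma coset_index_nat : countable_group G -> equinumerous coset_index nat.
Proof.
  intros [code hcode].
  apply (equinumerous_nat (fun q => to_nat (code (proj1_sig (fst q)), snd q)) (coset_of (gone G))).
  - intros [[r hr] n] [[r' hr'] n'] h. apply to_nat_inj in h. injection h as h1 h2.
    apply hcode in h1. subst. f_equal. apply subset_eq_compat. reflexivity.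
  - intros n n' h. injection h as h. exact h.
Qed.
End Transversal.

Section SpanMap.
Context {G : Group} (v v' : nat -> G).

Definition span_map (x : G) : G := evG G v' (epsilon (inhabits WOne) (fun w => evG G v w = x)).

Lemma span_map_in_span x : in_span G v' (span_map x).
Proof. eexists. reflexivity. Qed.

Hypothesis hrel : same_relations G v G v'.

Lemma span_map_evG w : span_map (evG G v w) = evG G v' w.
Proof.
  apply (same_relations_eq hrel).
  apply (epsilon_spec (inhabits WOne) (fun w' => evG G v w' = evG G v w)). exists w. reflexivity.
Qed.

Lemma span_map_mul a b : in_span G v a -> in_span G v b ->
  span_map (gmul G a b) = gmul G (span_map a) (span_map b).
Proof.
  intros [wa <-] [wb <-]. rewrite !span_map_evG. apply (span_map_evG (WMul wa wb)).
Qed.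
End SpanMap.

Lemma span_map_back {G : Group} (v v' : nat -> G) x : same_relations G v G v' ->
  in_span G v x -> span_map v' v (span_map v v' x) = x.
Proof.
  intros hrel [w <-]. rewrite span_map_evG by exact hrel.
  apply span_map_evG, same_relations_sym, hrel.
Qed.

Section StableLetter.
Context {G : Group} (v v' : nat -> G) (beta : coset_index v -> coset_index v').

(* Maps [(k r, n)] to [(phi k r', n')] where [r] is a coset representative,
   [k] lies in the span of [v], [phi] is the isomorphism onto the span of [v'],
   and [(r', n') = beta (r, n)]. *)
Definition stable_map (p : G * nat) : G * nat :=
  let q := beta (coset_of v (fst p) (snd p)) in
  (gmul G (span_map v v' (coset_part v (fst p))) (proj1_sig (fst q)), snd q).

Hypothesis hrel : same_relations G v G v'.

Lemma stable_map_mul k x n : in_span G v k ->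
  stable_map (gmul G k x, n) =
  (gmul G (span_map v v' k) (fst (stable_map (x, n))), snd (stable_map (x, n))).
Proof.
  intros hk. unfold stable_map. cbn [fst snd].
  rewrite coset_of_mul, coset_part_mul, span_map_mul, gassoc by auto using coset_part_in_span.
  reflexivity.
Qed.
End StableLetter.

Lemma stable_map_cancel {G : Group} (v v' : nat -> G) beta beta' :
  same_relations G v G v' -> (forall q, beta' (beta q) = q) ->
  forall p, stable_map v' v beta' (stable_map v v' beta p) = p.
Proof.
  intros hrel hbeta [x n]. unfold stable_map at 2. cbn [fst snd].
  set (k := span_map v v' (coset_part v x)).
  assert (hk : in_span G v' k) by apply span_map_in_span.
  destruct (beta (coset_of v x n)) as [[r hr] m] eqn:hq. cbn [fst snd proj1_sig].
  unfold stable_map. cbn [fst snd].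
  rewrite coset_of_mul by exact hk.
  pose proof (coset_of_index v' (exist _ r hr, m)) as e. cbn [fst snd proj1_sig] in e.
  rewrite e, <- hq, hbeta. cbn [coset_of fst snd proj1_sig].
  rewrite coset_part_of_rep by assumption.
  unfold k. rewrite span_map_back by auto using coset_part_in_span.
  rewrite coset_part_rep. reflexivity.
Qed.

Section LeftTranslation.
Context {G : Group}.

Definition left_translation (a : G) : bijection (G * nat).
Proof.
  refine (Bijection (fun p => (gmul G a (fst p), snd p))
                    (fun p => (gmul G (ginv G a) (fst p), snd p)) _ _);
    intros [x n]; cbn [fst snd]; rewrite <- gassoc, ?gmulVr, ?gmulVl, gmul1l; reflexivity.
Defined.

Lemma left_translation_hom : is_hom G (Sym (G * nat)) left_translation.
Proof. intros a b. apply bijection_eq. intros [x n]. cbn. rewrite gassoc. reflexivity. Qed.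

Lemma left_translation_inj : Injective left_translation.
Proof.
  intros a b h. apply (f_equal (fun p => fst (fwd p (gone G, 0)))) in h. cbn in h.
  rewrite !gmul1r in h. exact h.
Qed.
End LeftTranslation.

(* The HNN extension is realised as the group of permutations of [G * nat] generated by the left
   translations and by a bijection [t] that twists each coset of the span of [v] onto a coset of
   the span of [v'] by the isomorphism [evG G v w |-> evG G v' w]. *)
Theorem hnn_extension (G : Group) (v v' : nat -> G) :
  countable_group G -> same_relations G v G v' ->
  exists (Y : Group) (iota : G -> Y) (t : Y),
    countable_group Y /\ Injective iota /\ is_hom G Y iota /\
    forall i, gmul Y t (iota (v i)) = gmul Y (iota (v' i)) t.
Proof.
  intros hG hrel.
  destruct (equinumerous_trans (coset_index_nat v hG) (equinumerous_sym (coset_index_nat v' hG)))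
    as [beta [beta' [hbeta hbeta']]].
  set (T := Bijection (stable_map v v' beta) (stable_map v' v beta')
              (stable_map_cancel v' v beta' beta (same_relations_sym hrel) hbeta')
              (stable_map_cancel v v' beta beta' hrel hbeta)).
  destruct (countable_enumeration hG) as [code [decode hdecode]].
  set (gens := (fun n => match n with 0 => T | S n => left_translation (decode n) end)
                : nat -> Sym (G * nat)).
  assert (hspan : forall x, in_span (Sym (G * nat)) gens (left_translation x)).
  { intros x. rewrite <- (hdecode x). apply (in_span_var gens (S (code x))). }
  exists (span gens), (fun x => exist _ (left_translation x) (hspan x)),
    (exist _ T (in_span_var gens 0)).
  split; [apply span_countable|]. split; [|split].
  - intros x y h. apply left_translation_inj. exact (f_equal (@proj1_sig _ _) h).
  - intros x y. apply span_val_inj, left_translation_hom.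
  - intros i. apply span_val_inj, bijection_eq. intros [x n]. cbn -[stable_map].
    rewrite (stable_map_mul v v' beta hrel) by apply in_span_var.
    rewrite (span_map_evG v v' hrel (WVar i) : span_map v v' (v i) = v' i). reflexivity.
Qed.

(** * Generic groups: tuples with the same relations are conjugate *)

(* Tuples are padded with the identity [0]. *)
Definition val (L : list nat) (i : nat) : nat := nth i L 0.

Lemma val_in L i : val L i = 0 \/ In (val L i) L.
Proof. unfold val. destruct (nth_in_or_default i L 0); auto. Qed.

Lemma val_firstn L k i : val (firstn k L) i = trunc 0 k (val L) i.
Proof. unfold val, trunc. rewrite nth_firstn. destruct (i <? k); reflexivity. Qed.

Lemma val_firstn_lt L {k i} : i < k -> val (firstn k L) i = val L i.
Proof.
  intros hi. rewrite val_firstn. unfold trunc. destruct (Nat.ltb_spec i k); [reflexivity | lia].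
Qed.

Definition similar_tuples_conjugate (L L' : list nat) (A : table) : Prop :=
  is_group_table A /\
  ((exists w, ~ (evT A (val L) w = 0 <-> evT A (val L') w = 0)) \/
   exists t, forall i, A t (val L i) = A (val L' i) t).

Lemma similar_tuples_conjugate_open L L' : G_open (similar_tuples_conjugate L L').
Proof.
  split; [intros A h; apply h|].
  intros A [HA [[w hw]|[t ht]]].
  - exists (word_support A (val L) w ++ word_support A (val L') w). intros B HB hag.
    apply agree_on_app in hag as [h1 h2]. split; [exact HB|]. left. exists w.
    rewrite (evT_local A B (val L) w), (evT_local A B (val L') w); auto.
  - set (N := length L + length L').
    exists (flat_map (fun i => [(t, val L i); (val L' i, t)]) (seq 0 N)).
    intros B HB hag. split; [exact HB|]. right. exists t. intros i.
    destruct (Nat.lt_ge_cases i N) as [hi|hi].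
    + assert (hpos : forall p, In p [(t, val L i); (val L' i, t)] -> In p (flat_map
        (fun i => [(t, val L i); (val L' i, t)]) (seq 0 N))).
      { intros p hp. apply in_flat_map. exists i. split; [apply in_seq; lia | exact hp]. }
      pose proof (hag (t, val L i) ltac:(apply hpos; simpl; auto)) as h1.
      pose proof (hag (val L' i, t) ltac:(apply hpos; simpl; auto)) as h2.
      cbn [fst snd] in h1, h2. rewrite <- h1, <- h2. apply ht.
    + unfold val. rewrite !nth_overflow by lia. rewrite table_mul0l, table_mul0r by exact HB.
      reflexivity.
Qed.

Lemma similar_tuples_conjugate_dense L L' : G_dense (similar_tuples_conjugate L L').
Proof.
  intros A l HA.
  destruct (classic (exists w, ~ (evT A (val L) w = 0 <-> evT A (val L') w = 0))) as [hw|hsim].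
  { exists A. split; [exact HA|]. split; [intros p _; reflexivity|].
    split; [exact HA | left; exact hw]. }
  assert (hrel : same_relations (tgroup A HA) (val L) (tgroup A HA) (val L')).
  { intros w. apply NNPP. intros hn. apply hsim. exists w. exact hn. }
  destruct (hnn_extension _ _ _ (tgroup_countable A HA) hrel)
    as [Y [iota [t [hY [hiota [hhom hconj]]]]]].
  destruct (relabel A HA iota hY hiota hhom l (0 :: L ++ L')) as [B [HB [hag [psi [hfix hmul]]]]].
  assert (hfixval : forall L0 i, incl L0 (L ++ L') -> psi (iota (val L0 i)) = val L0 i).
  { intros L0 i hL0. apply hfix. destruct (val_in L0 i) as [->|hi]; [left | right]; auto. }
  exists B. split; [exact HB|]. split; [exact hag|]. split; [exact HB|]. right.
  exists (psi t). intros i.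
  rewrite <- (hfixval L i), <- (hfixval L' i) at 1 by auto using incl_appl, incl_appr, incl_refl.
  rewrite !hmul, hconj. reflexivity.
Qed.

Fixpoint decode_tuple (k c : nat) : list nat :=
  match k with 0 => [] | S k => fst (of_nat c) :: decode_tuple k (snd (of_nat c)) end.

Definition decode_list (n : nat) : list nat := decode_tuple (fst (of_nat n)) (snd (of_nat n)).

Lemma decode_list_surj L : exists n, decode_list n = L.
Proof.
  assert (h : exists c, decode_tuple (length L) c = L).
  { induction L as [|a L [c hc]]; [exists 0; reflexivity|].
    exists (to_nat (a, c)). cbn [decode_tuple length]. rewrite cancel_of_to. cbn [fst snd].
    rewrite hc. reflexivity. }
  destruct h as [c hc]. exists (to_nat (length L, c)). unfold decode_list.
  rewrite cancel_of_to. exact hc.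
Qed.

Lemma similar_tuples_conjugate_comeager :
  G_comeager (fun A => forall L L', similar_tuples_conjugate L L' A).
Proof.
  apply (comeager_mono (fun A => forall n,
    similar_tuples_conjugate (decode_list (fst (of_nat n))) (decode_list (snd (of_nat n))) A)).
  - intros A _ h L L'.
    destruct (decode_list_surj L) as [n <-], (decode_list_surj L') as [n' <-].
    specialize (h (to_nat (n, n'))). rewrite cancel_of_to in h. exact h.
  - apply comeager_countable. intros n.
    apply comeager_of_dense_open;
      [apply similar_tuples_conjugate_open | apply similar_tuples_conjugate_dense].
Qed.

(** * Embedding a countable group into a generic group *)

Definition fg_gen {H : Group} (s : list H) (i : nat) : fg_subgroup H s.
Proof.
  exists (nth i s (gone H)).
  destruct (nth_in_or_default i s (gone H)) as [h | ->]; [apply gen_in, h | apply gen_one].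
Defined.

Lemma fg_subgroup_relations (H G : Group) (s : list H) (phi : fg_subgroup H s -> G) :
  Injective phi -> is_hom _ _ phi ->
  same_relations H (fun i => nth i s (gone H)) G (fun i => phi (fg_gen s i)).
Proof.
  intros hinj hhom. apply (same_relations_trans (v2 := fg_gen s)).
  - apply same_relations_sym.
    apply (same_relations_hom (fg_subgroup H s) H (@proj1_sig _ _) (fg_gen s)).
    + intros x y. reflexivity.
    + intros x y. apply fg_eq.
  - apply same_relations_hom; assumption.
Qed.

Lemma embeds_fg_subgroup (H : Group) (s : list H) A : embeds H A -> embeds (fg_subgroup H s) A.
Proof.
  intros [phi [hinj hhom]]. exists (fun x => phi (proj1_sig x)). split.
  - intros x y e. apply fg_eq, hinj, e.
  - intros x y. apply hhom.
Qed.

Lemma nth_map_seq {X : Type} (g : nat -> X) k i d : i < k -> nth i (map g (seq 0 k)) d = g i.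
Proof.
  intros hi. rewrite nth_indep with (d' := g 0) by (rewrite length_map, length_seq; lia).
  rewrite map_nth, seq_nth by lia. reflexivity.
Qed.

Definition prefix {H : Group} (e : nat -> H) (k : nat) : list H := map e (seq 0 k).

Section GenericEmbedding.
Variables (H : Group) (f : H -> nat) (e : nat -> H).
Hypothesis e_f : forall x, e (f x) = x.
Variables (G : table) (HG : is_group_table G).
Hypothesis G_conjugate : forall L L', similar_tuples_conjugate L L' G.
Hypothesis G_embeds : forall k, embeds (fg_subgroup H (prefix e k)) G.

Let TG := tgroup G HG.

Definition realizes (k : nat) (L : list nat) : Prop :=
  same_relations H (trunc (gone H) k e) TG (val L).

Lemma realizes_exists k : exists Y, length Y = k /\ realizes k Y.
Proof.
  destruct (G_embeds k) as [phi [hinj hhom]].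
  exists (map (fun i => phi (fg_gen (prefix e k) i)) (seq 0 k)).
  split; [rewrite length_map, length_seq; reflexivity|].
  refine (same_relations_ext _ _ _ _ (fg_subgroup_relations H TG (prefix e k) phi hinj hhom)).
  - intros i. unfold prefix, trunc. destruct (Nat.ltb_spec i k).
    + apply nth_map_seq. lia.
    + apply nth_overflow. rewrite length_map, length_seq. lia.
  - intros i. unfold val. destruct (Nat.lt_ge_cases i k).
    + symmetry. apply (nth_map_seq (fun i => phi (fg_gen (prefix e k) i))). lia.
    + rewrite nth_overflow by (rewrite length_map, length_seq; lia).
      transitivity (phi (gone (fg_subgroup H (prefix e k)))); [|exact (@hom_one _ TG phi hhom)].
      f_equal. apply fg_eq, nth_overflow. unfold prefix. rewrite length_map, length_seq. lia.
Qed.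

Lemma conjugate_of_same_relations L L' : same_relations TG (val L) TG (val L') ->
  exists t, forall i, G t (val L i) = G (val L' i) t.
Proof.
  intros hrel. destruct (G_conjugate L L') as [_ [[w hw] | h]];
    [contradiction (hw (hrel w)) | exact h].
Qed.

(* Conjugate a realization of the first [k+1] elements so that it extends [Z]. *)
Lemma realizes_extend k Z Y : length Z = k -> length Y = S k ->
  realizes k Z -> realizes (S k) Y -> exists x, realizes (S k) (Z ++ [x]).
Proof.
  intros hZ hY hrZ hrY.
  assert (hrY' : realizes k (firstn k Y)).
  { refine (same_relations_ext _ _ _ _ (same_relations_trunc k hrY)).
    - intros i. apply trunc_trunc. lia.
    - intros i. symmetry. apply val_firstn. }
  destruct (conjugate_of_same_relations (firstn k Y) Z
    (same_relations_trans (same_relations_sym hrY') hrZ)) as [t ht].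
  set (c := fun u => gmul TG (gmul TG t u) (ginv TG t)).
  exists (c (val Y k)).
  assert (hval : forall i, c (val Y i) = val (Z ++ [c (val Y k)]) i).
  { intros i. unfold val. destruct (lt_eq_lt_dec i k) as [[hi | ->] | hi].
    - rewrite app_nth1 by lia. symmetry. apply eq_conj_of_commute.
      change (gmul TG t (val Y i) = gmul TG (val Z i) t). rewrite <- (val_firstn_lt Y hi). apply ht.
    - rewrite app_nth2, hZ, Nat.sub_diag by lia. reflexivity.
    - rewrite !nth_overflow by (rewrite ?length_app; simpl; lia).
      unfold c. rewrite gmul1r. apply gmulVr. }
  exact (same_relations_ext _ _ (fun _ => eq_refl) hval
    (same_relations_trans hrY
      (same_relations_hom _ _ c _ (conj_is_hom TG t) (conj_injective TG t)))).
Qed.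

Definition extend_tuple (k : nat) (Z : list nat) : nat :=
  epsilon (inhabits 0) (fun x => realizes (S k) (Z ++ [x])).

Fixpoint tuples (k : nat) : list nat :=
  match k with 0 => [] | S k => tuples k ++ [extend_tuple k (tuples k)] end.

Lemma tuples_spec k : length (tuples k) = k /\ realizes k (tuples k).
Proof.
  induction k as [|k [hl hr]].
  - split; [reflexivity|].
    refine (same_relations_ext _ _ _ _ (same_relations_trivial H TG)); intros [|i]; reflexivity.
  - cbn [tuples]. split; [rewrite length_app, hl; simpl; lia|].
    destruct (realizes_exists (S k)) as [Y [hY hrY]].
    apply (epsilon_spec (inhabits 0) (fun x => realizes (S k) (tuples k ++ [x]))).
    exact (realizes_extend k (tuples k) Y hl hY hr hrY).
Qed.

Definition limit_tuple (i : nat) : nat := nth i (tuples (S i)) 0.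

Lemma tuples_nth n i : i < n -> nth i (tuples n) 0 = limit_tuple i.
Proof.
  induction n as [|n IH]; intros hi; [lia|]. unfold limit_tuple.
  destruct (Nat.eq_dec i n) as [->|ne]; [reflexivity|].
  cbn [tuples]. rewrite app_nth1 by (rewrite (proj1 (tuples_spec n)); lia). apply IH. lia.
Qed.

Lemma generic_embeds : embeds H G.
Proof.
  assert (hrel : same_relations H e TG limit_tuple).
  { apply same_relations_of_trunc. intros k.
    refine (same_relations_ext _ _ (fun _ => eq_refl) _ (proj2 (tuples_spec k))).
    intros i. unfold val, trunc. destruct (Nat.ltb_spec i k).
    - apply tuples_nth. lia.
    - apply nth_overflow. rewrite (proj1 (tuples_spec k)). lia. }
  destruct (embedding_of_same_relations H TG e f limit_tuple e_f hrel) as [hinj hhom].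
  exists (fun x => limit_tuple (f x)). split; [exact hinj | exact hhom].
Qed.
End GenericEmbedding.

Theorem corollary7p3 (H : Group) :
  generically_embeddable H <->
  (countable_group H /\
   forall s : list H, generically_embeddable (@fg_subgroup H s)).
Proof.
  split.
  - intros hgen. split.
    + destruct (comeager_nonempty _ hgen) as [A [_ [_ [phi [hinj _]]]]]. exists phi. exact hinj.
    + intros s. apply (comeager_mono (E_ H)); [|exact hgen].
      intros A _ [HA hemb]. split; [exact HA | apply embeds_fg_subgroup, hemb].
  - intros [hcount hfg]. destruct (countable_enumeration hcount) as [f [e e_f]].
    apply (comeager_mono (fun A => (forall k, E_ (fg_subgroup H (prefix e k)) A) /\
                                   forall L L', similar_tuples_conjugate L L' A)).
    + intros A HA [hemb hconj]. split; [exact HA|].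
      exact (generic_embeds H f e e_f A HA hconj (fun k => proj2 (hemb k))).
    + apply comeager_and; [apply comeager_countable; intros k; apply hfg |
                           exact similar_tuples_conjugate_comeager].
Qed.
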